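(* Let $p$ be a prime and $r\ge2$ even. Let $(w_1,w_2)$ be a sequence in $U(p^r)$ such that $(f_{p^r,p}(w_1),f_{p^r,p}(w_2))$ is not a $Q_p$-weighted zero-sum sequence, and let $u\in U(p^r)$. Then the sequence $(uw_1,uw_2,pw_1,pw_2)$ in $\mathbb Z_{p^r}$ has no $S(p^r)^*$-weighted zero-sum subsequence.
   Context: $\mathbb Z_m=\mathbb Z/m\mathbb Z$, $U(m)$ its group of units, $S(m)=\{x^2:x\in\mathbb Z_m\}$, $S(m)^*=S(m)\setminus\{0\}$; for a prime $p$, $Q_p=\{x^2:x\in U(p)\}$. For $m\mid n$, $f_{n,m}:\mathbb Z_n\to\mathbb Z_m$ is the natural map. For $A\subseteq\mathbb Z_m$, a sequence $(y_1,\dots,y_k)$ ($k\ge1$) is an $A$-weighted zero-sum sequence if there exist $a_i\in A$ with $\sum a_iy_i=0$; a sequence has an $A$-weighted zero-sum subsequence if some nonempty subsequence is one. *)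

From mathcomp Require Import all_boot all_order all_algebra.
Set Implicit Arguments. Unset Strict Implicit. Unset Printing Implicit Defensive.
Import GRing.Theory.
Local Open Scope ring_scope.

(* Z_m is 'Z_m (used only for m >= 2). *)

Definition Sq (R : comNzRingType) : R -> Prop := fun x => exists y : R, x = y ^+ 2.
Definition Sqstar (R : comNzRingType) : R -> Prop := fun x => Sq x /\ x <> 0.
Definition Qunits (R : comUnitRingType) : R -> Prop :=
  fun x => exists y : R, y \is a GRing.unit /\ x = y ^+ 2.

Definition fnat (n m : nat) (x : 'Z_n) : 'Z_m := (nat_of_ord x)%:R.

Definition weighted_zs (R : comNzRingType) (A : R -> Prop) (s : seq R) : Prop :=
  (0 < size s)%N /\
  exists a : 'I_(size s) -> R, (forall i, A (a i)) /\ \sum_(i < size s) a i * s`_i = 0.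

Definition has_wzs_subseq (R : comNzRingType) (A : R -> Prop) (s : seq R) : Prop :=
  exists t : seq R, subseq t s /\ weighted_zs A t.

From mathcomp Require Import all_boot all_order all_algebra.
From mathcomp Require Import zify ring.
Set Implicit Arguments. Unset Strict Implicit.
Import GRing.Theory.
Local Open Scope ring_scope.

(* Every square of Z_(p^r) is p^(2k) v^2 with v a unit (taking k = r for 0).
   For square weights c1, c2, the hypothesis on (w1, w2) modulo p makes
   c1 w1 + c2 w2 equal to p^(2k) times a unit: it has even valuation, unless
   2k >= r and both weights vanish.  A weighted zero sum of
   (u w1, u w2, p w1, p w2) thus reads p^(2k) (u z) + p^(2l+1) z' = 0 with z, z'
   units; terms of distinct valuations below r cannot cancel, so 2k >= r and
   2l + 1 >= r, and as r is even all four weights vanish. *)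

Lemma subseq_weighted_sum (R : comNzRingType) (A : R -> Prop) (s t : seq R)
    (a : 'I_(size t) -> R) :
  subseq t s -> (forall i, A (a i)) ->
  exists c : seq R, [/\ size c = size s, {in c, forall x, x = 0 \/ A x},
    (0 < size t)%N -> exists2 x, x \in c & A x
  & \sum_(i < size s) c`_i * s`_i = \sum_(i < size t) a i * t`_i].
Proof.
elim: s t a => [|x s IHs] [|y t] a //= sub_ts Aa.
- by exists [::]; split=> //; rewrite !big_ord0.
- exists (nseq (size s).+1 0); split=> //.
  + by rewrite size_nseq.
  + by move=> z /nseqP[-> _]; left.
  + by rewrite big_ord0 big1 // => i _; rewrite nth_nseq if_same mul0r.
case: eqP sub_ts => [-> | _] sub_ts.
  have [c [size_c c0A cA sum_c]] := IHs t (fun i => a (lift ord0 i)) sub_ts (fun i => Aa _).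
  exists (a ord0 :: c); split=> /=.
  - by rewrite size_c.
  - by move=> z; rewrite inE => /predU1P[->|/c0A//]; right.
  - by move=> _; exists (a ord0); rewrite ?mem_head.
  - by rewrite !big_ord_recl sum_c.
have [c [size_c c0A cA sum_c]] := IHs (y :: t) a sub_ts Aa.
exists (0 :: c); split=> /=.
- by rewrite size_c.
- by move=> z; rewrite inE => /predU1P[->|/c0A//]; left.
- by move=> /cA[z zc Az]; exists z; rewrite // inE zc orbT.
- by rewrite big_ord_recl mul0r add0r.
Qed.

Lemma has_wzs_subseq_coefs (R : comNzRingType) (A : R -> Prop) (s : seq R) :
  has_wzs_subseq A s ->
  exists c : seq R, [/\ size c = size s, {in c, forall x, x = 0 \/ A x},
    exists2 x, x \in c & A x & \sum_(i < size s) c`_i * s`_i = 0].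
Proof.
move=> [t [sub_ts [t_gt0 [a [Aa sum_a]]]]].
have [c [size_c c0A cA sum_c]] := subseq_weighted_sum sub_ts Aa.
by exists c; split=> //; [apply: cA | rewrite sum_c].
Qed.

Lemma weighted_zs_Qunits_pair (p : nat) (a b x y : 'Z_p) :
  a \is a GRing.unit -> b \is a GRing.unit -> a ^+ 2 * x + b ^+ 2 * y = 0 ->
  weighted_zs (@Qunits 'Z_p) [:: x; y].
Proof.
move=> ua ub sum0; split=> //.
exists (fun i : 'I_2 => if val i == 0%N then a ^+ 2 else b ^+ 2); split.
  by case=> [[|[|]]] //= _; [exists a | exists b].
by rewrite !big_ord_recl big_ord0 /= addr0.
Qed.

Lemma Zp_unitE (p : nat) (x : 'Z_p) : prime p -> (x \is a GRing.unit) = (x != 0).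
Proof.
move=> p_pr; have p_gt1 := prime_gt1 p_pr.
rewrite -[x]natr_Zp unitZpE // prime_coprime //.
by rewrite -(inj_eq val_inj) /= val_Zp_nat // mod0n modn_small.
Qed.

Section PrimePowerModulus.

Variables (p r : nat).
Hypotheses (p_pr : prime p) (r_gt0 : (0 < r)%N).

Let p_gt1 : (1 < p)%N := prime_gt1 p_pr.

Lemma pexpn_gt1 : (1 < p ^ r)%N.
Proof. by rewrite -{1}(expn0 p) ltn_exp2l. Qed.

Lemma natr_Zpexp_eq0 (n : nat) : ((n%:R : 'Z_(p ^ r)) == 0) = (p ^ r %| n)%N.
Proof. by rewrite -(inj_eq val_inj) /= val_Zp_nat ?pexpn_gt1 // mod0n. Qed.

Lemma fnat_natr (n : nat) : fnat p (n%:R : 'Z_(p ^ r)) = n%:R.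
Proof.
apply: val_inj; rewrite /fnat /= !val_Zp_nat ?pexpn_gt1 // modn_dvdm //.
by rewrite -{1}(expn1 p) dvdn_exp2l.
Qed.

Lemma fnatD (x y : 'Z_(p ^ r)) : fnat p (x + y) = fnat p x + fnat p y.
Proof. by rewrite -[x]natr_Zp -[y]natr_Zp -natrD !fnat_natr natrD. Qed.

Lemma fnatM (x y : 'Z_(p ^ r)) : fnat p (x * y) = fnat p x * fnat p y.
Proof. by rewrite -[x]natr_Zp -[y]natr_Zp -natrM !fnat_natr natrM. Qed.

Lemma fnat_pexpn (a : nat) : fnat p ((p ^ a)%:R : 'Z_(p ^ r)) = (a == 0)%:R.
Proof.
rewrite fnat_natr; case: a => [|a]; first by rewrite expn0.
by apply/eqP; rewrite -(inj_eq val_inj) /= val_Zp_nat // expnS mulnC modnMl.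
Qed.

Lemma unit_fnatE (x : 'Z_(p ^ r)) : (x \is a GRing.unit) = (fnat p x != 0).
Proof.
by rewrite -Zp_unitE // -[x]natr_Zp fnat_natr !unitZpE ?pexpn_gt1 ?coprime_pexpl.
Qed.

Lemma fnat_unit (x : 'Z_(p ^ r)) : x \is a GRing.unit -> fnat p x \is a GRing.unit.
Proof. by rewrite unit_fnatE Zp_unitE. Qed.

Lemma pexpn_eq0 (a : nat) : ((p ^ a)%:R == 0 :> 'Z_(p ^ r)) = (r <= a)%N.
Proof. by rewrite natr_Zpexp_eq0 dvdn_Pexp2l. Qed.

Lemma pexpn_unit_mul_eq0 (a : nat) (z : 'Z_(p ^ r)) :
  z \is a GRing.unit -> ((p ^ a)%:R * z == 0) = (r <= a)%N.
Proof.
move=> z_unit; rewrite -pexpn_eq0; apply/eqP/eqP => [pz0|->]; last by rewrite mul0r.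
by rewrite -(mulrK z_unit (p ^ a)%:R) pz0 mul0r.
Qed.

Lemma Zpexpn_pfactor (y : 'Z_(p ^ r)) :
  exists k v, v \is a GRing.unit /\ y = (p ^ k)%:R * v.
Proof.
have [y0 | y_neq0] := eqVneq y 0.
  by exists r, 1; rewrite unitr1 mulr1 y0; split=> //; apply/esym/eqP; rewrite pexpn_eq0.
have y_gt0 : (0 < y)%N by rewrite lt0n; rewrite -(inj_eq val_inj) in y_neq0.
have [v coprime_pv def_y] := pfactor_coprime p_pr y_gt0.
exists (logn p y), v%:R; split.
  by rewrite unitZpE ?pexpn_gt1 // coprime_pexpl // coprime_sym.
by rewrite -natrM mulnC -def_y natr_Zp.
Qed.

Lemma Sq_pexpn_unit (c : 'Z_(p ^ r)) :
  Sq c -> exists k v, v \is a GRing.unit /\ c = (p ^ (2 * k))%:R * v ^+ 2.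
Proof.
move=> [y ->]; have [k [v [v_unit ->]]] := Zpexpn_pfactor y.
by exists k, v; rewrite exprMn -natrX -expnM mulnC.
Qed.

Lemma pexpn_unit_addr_eq0 (a b : nat) (x y : 'Z_(p ^ r)) :
  a != b -> x \is a GRing.unit -> y \is a GRing.unit ->
  (p ^ a)%:R * x + (p ^ b)%:R * y = 0 -> (r <= minn a b)%N.
Proof.
wlog lt_ab : a b x y / (a < b)%N => [hwlog neq_ab x_unit y_unit sum0|].
  move: (neq_ab); rewrite neq_ltn => /orP[lt_ab|lt_ba]; first exact: (hwlog a b x y).
  by rewrite minnC; apply: (hwlog b a y x); rewrite 1?eq_sym // addrC.
move=> _ x_unit y_unit sum0.
have xy_unit : x + (p ^ (b - a))%:R * y \is a GRing.unit.
  by rewrite unit_fnatE fnatD fnatM fnat_pexpn subn_eq0 leqNgt lt_ab mul0r addr0 -unit_fnatE.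
rewrite (minn_idPl (ltnW lt_ab)) -(pexpn_unit_mul_eq0 _ xy_unit).
by rewrite mulrDr mulrA -natrM -expnD subnKC ?(ltnW lt_ab) // sum0.
Qed.

Lemma Sq_pair_pexpn_unit (w1 w2 c1 c2 : 'Z_(p ^ r)) :
  w1 \is a GRing.unit -> w2 \is a GRing.unit ->
  ~ weighted_zs (@Qunits 'Z_p) [:: fnat p w1; fnat p w2] -> Sq c1 -> Sq c2 ->
  exists k z, [/\ z \is a GRing.unit, c1 * w1 + c2 * w2 = (p ^ (2 * k))%:R * z
    & (r <= 2 * k)%N -> c1 = 0 /\ c2 = 0].
Proof.
move=> w1_unit w2_unit notQ /Sq_pexpn_unit[k1 [v1 [v1_unit ->]]].
move=> /Sq_pexpn_unit[k2 [v2 [v2_unit ->]]].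
have {notQ} notQ (a b : 'Z_p) : a \is a GRing.unit -> b \is a GRing.unit ->
    a ^+ 2 * fnat p w1 + b ^+ 2 * fnat p w2 != 0.
  by move=> a_unit b_unit; apply/eqP => /(weighted_zs_Qunits_pair a_unit b_unit).
move: v1_unit v2_unit w1_unit w2_unit notQ.
wlog le_k12 : k1 k2 v1 v2 w1 w2 / (k1 <= k2)%N => [hwlog|].
  have [|/ltnW le_k21] := leqP k1 k2; first exact: hwlog.
  move=> v1_unit v2_unit w1_unit w2_unit notQ.
  have notQ21 (a b : 'Z_p) : a \is a GRing.unit -> b \is a GRing.unit ->
      a ^+ 2 * fnat p w2 + b ^+ 2 * fnat p w1 != 0.
    by move=> a_unit b_unit; rewrite addrC notQ.
  have [k [z [z_unit sum_z zero_k]]] :=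
    hwlog k2 k1 v2 v1 w2 w1 le_k21 v2_unit v1_unit w2_unit w1_unit notQ21.
  by exists k, z; rewrite addrC; split=> // /zero_k[].
move=> v1_unit v2_unit w1_unit w2_unit notQ.
exists k1, (v1 ^+ 2 * w1 + (p ^ (2 * (k2 - k1)))%:R * (v2 ^+ 2 * w2)); split.
- rewrite unit_fnatE fnatD !fnatM fnat_pexpn.
  case: (2 * (k2 - k1) =P 0)%N => _ /=; first by rewrite mul1r notQ ?fnat_unit.
  by rewrite mul0r addr0 -Zp_unitE // !unitrM !fnat_unit.
- rewrite mulrDr !mulrA -natrM -expnD.
  by have -> : (2 * k1 + 2 * (k2 - k1) = 2 * k2)%N by lia.
- move=> le_r_k1; have le_r_k2 : (r <= 2 * k2)%N by lia.
  by move: le_r_k1 le_r_k2; rewrite -!pexpn_eq0 => /eqP-> /eqP->; rewrite !mul0r.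
Qed.

End PrimePowerModulus.

Unset Implicit Arguments. Set Strict Implicit.

Theorem mainTheorem13 (p r : nat) (w1 w2 u : 'Z_(p ^ r)) :
  prime p -> (2 <= r)%N -> ~~ odd r ->
  w1 \is a GRing.unit -> w2 \is a GRing.unit ->
  ~ weighted_zs (@Qunits 'Z_p) [:: fnat p w1; fnat p w2] ->
  u \is a GRing.unit ->
  ~ has_wzs_subseq (@Sqstar 'Z_(p ^ r))
      [:: u * w1; u * w2; p%:R * w1; p%:R * w2].
Proof.
move=> p_pr r_ge2 r_even w1_unit w2_unit notQ u_unit.
have r_gt0 : (0 < r)%N by apply: leq_trans r_ge2.
case/has_wzs_subseq_coefs => c [size_c c0S [x x_c Sx] sum_c].
case: c size_c c0S x_c sum_c => [|c1 [|c2 [|c3 [|c4 [|]]]]] //= _ c0S x_c.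
rewrite !big_ord_recl big_ord0 /= addr0 => sum_c.
have [Sq1 Sq2 Sq3 Sq4] : [/\ Sq c1, Sq c2, Sq c3 & Sq c4].
  have Sq_c y : y \in [:: c1; c2; c3; c4] -> Sq y.
    by move=> /c0S[->|[]//]; exists 0; rewrite expr0n.
  by split; apply: Sq_c; rewrite !inE eqxx ?orbT.
have [k [z [z_unit def_z zero12]]] :=
  Sq_pair_pexpn_unit p_pr r_gt0 w1_unit w2_unit notQ Sq1 Sq2.
have [l [z' [z'_unit def_z' zero34]]] :=
  Sq_pair_pexpn_unit p_pr r_gt0 w1_unit w2_unit notQ Sq3 Sq4.
have sum0 : (p ^ (2 * k))%:R * (u * z) + (p ^ (2 * l).+1)%:R * z' = 0.
  rewrite mulrCA -def_z expnS natrM -mulrA -def_z' -sum_c; ring.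
have uz_unit : u * z \is a GRing.unit by rewrite unitrM u_unit.
have neq_kl : (2 * k != (2 * l).+1)%N by apply/eqP; lia.
have := pexpn_unit_addr_eq0 p_pr r_gt0 neq_kl uz_unit z'_unit sum0.
have [h def_r] : exists h, r = (2 * h)%N.
  by exists r./2; rewrite -{1}(odd_double_half r) (negbTE r_even) add0n -mul2n.
rewrite leq_min => /andP[/zero12[c1_0 c2_0] le_r_l].
have [c3_0 c4_0] : c3 = 0 /\ c4 = 0 by apply: zero34; lia.
by case: Sx => _; apply; apply/eqP; move: x_c; rewrite !inE c1_0 c2_0 c3_0 c4_0 !orbb.
Qed.
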